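(* Let $x,y\in V(T)$ with $y\neq x$, let $\ddot s(x)$ be a worst-case scenario of $T$ with respect to $x$, and suppose $y$ is a prime broadcast center of $T$ under $\ddot s(x)$. Let $s$ be the scenario with $w^s_{a,b}=w^{\alpha_{x,y}}_{a,b}$ if $(a,b)\in P_{x,y}\cup E(T_{y,x})$ and $w^s_{a,b}=w^{\ddot s(x)}_{a,b}$ otherwise. Then $s$ is a worst-case scenario of $T$ with respect to $x$, and $y\in B^s$.
   Context: $T$ is a finite tree; each edge $(u,v)$ carries an interval $[w^-_{u,v},w^+_{u,v}]$ of non-negative reals. A scenario $s$ assigns to every edge a weight $w^s_{u,v}\in[w^-_{u,v},w^+_{u,v}]$; $C$ is the set of all scenarios. A constant $\rho>0$ is fixed. Broadcast time (postal model): for a subtree $G$ of $T$ and $u\in V(G)$, $b^s(u,G)=0$ if $u$ has no neighbour in $G$; otherwise, if $v_1,\dots,v_h$ are the neighbours of $u$ in $G$ and $G_{v}$ is the component of $G-u$ containing $v$, $b^s(u,G)=\min_{\pi}\max_{1\le k\le h}\big(k\rho+w^s_{u,v_{\pi(k)}}+b^s(v_{\pi(k)},G_{v_{\pi(k)}})\big)$ over permutations $\pi$. $B^s=\{u: b^s(u,T)\le b^s(v,T)\ \forall v\}$. For distinct $x,y$, $T_{x,y}$ is the component of $T-x$ containing $y$ and $\bar T_{x,y}$ the subtree induced by $V(T)\setminus V(T_{x,y})$. $P_{x,y}$ is the set of edges of the $x$–$y$ path. A vertex $\hat\kappa\in B^s$ is a prime broadcast center under $s$ if $b^s(\hat\kappa,\bar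 T_{\hat\kappa,u})\ge b^s(u,\bar T_{u,\hat\kappa})$ for every neighbour $u$ of $\hat\kappa$. Regret $r^s_{x,y}=b^s(x,T)-b^s(y,T)$; $\mathrm{max\_r}(x)=\max\{r^s_{x,y}:y\in V(T),s\in C\}$; $s'$ is a worst-case scenario w.r.t. $x$ if $\mathrm{max\_r}(x)=r^{s'}_{x,y'}$ for some $y'$. Base scenario: for $v\neq x$, $\alpha_{x,v}$ has $w^{\alpha_{x,v}}_{a,b}=w^+_{a,b}$ if $(a,b)\in P_{x,v}\cup E(\bar T_{v,x})$ and $w^-_{a,b}$ otherwise. *)

From HB Require Import structures.
From mathcomp Require Import all_boot all_order all_algebra.
From mathcomp Require Import reals.
From Stdlib Require Import ClassicalDescription.
Set Implicit Arguments. Unset Strict Implicit. Unset Printing Implicit Defensive.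
Import Order.TTheory GRing.Theory Num.Theory.
Local Open Scope ring_scope.

Section Broadcast.
Variables (R : realType) (V : finType) (e : rel V).

Definition is_tree : Prop :=
  symmetric e /\ irreflexive e /\ (forall a b, connect e a b) /\
  (forall x y (p q : seq V),
      path e x p -> last x p = y -> uniq (x :: p) ->
      path e x q -> last x q = y -> uniq (x :: q) -> p = q).

Definition on_path (x y a b : V) : Prop :=
  exists p : seq V, [/\ path e x p, last x p = y, uniq (x :: p) &
     infix [:: a; b] (x :: p) || infix [:: b; a] (x :: p)].

Definition comp (G : {set V}) (u v : V) : {set V} :=
  [set z | connect [rel a b | [&& e a b, a \in G :\ u & b \in G :\ u]] v z
           && (z \in G :\ u)].

Definition Tc (x y : V) : {set V} := comp setT x y.
Definition Tbar (x y : V) : {set V} := ~: Tc x y.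

Definition nbrs (G : {set V}) (u : V) : {set V} := [set v in G | e u v].

Definition maxlist (s : seq R) : R := foldr Num.max (head 0 s) s.
Definition minlist (s : seq R) : R := foldr Num.min (head 0 s) s.

(* broadcast time with fuel; the fuel #|G| suffices since components
   strictly shrink *)
Fixpoint bfuel (rho : R) (w : V -> V -> R) (n : nat) (u : V) (G : {set V})
    : R :=
  match n with
  | 0 => 0
  | n'.+1 =>
    let N := enum (nbrs G u) in
    if N is [::] then 0 else
    minlist [seq maxlist
               (mkseq (fun i => (i.+1)%:R * rho + w u (nth u p i)
                    + bfuel rho w n' (nth u p i) (comp G u (nth u p i)))
                  (size p))
            | p <- permutations N]
  end.

Definition btime (rho : R) (w : V -> V -> R) (u : V) (G : {set V}) : R :=
  bfuel rho w #|G| u G.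

Definition Bcenters (rho : R) (w : V -> V -> R) : {set V} :=
  [set u | [forall v, btime rho w u setT <= btime rho w v setT]].

Definition is_scenario (wlo whi w : V -> V -> R) : Prop :=
  (forall a b, w a b = w b a) /\
  (forall a b, e a b -> wlo a b <= w a b <= whi a b).

Definition regret (rho : R) (w : V -> V -> R) (x y : V) : R :=
  btime rho w x setT - btime rho w y setT.

Definition worst_case (rho : R) (wlo whi : V -> V -> R) (x : V)
    (s' : V -> V -> R) : Prop :=
  is_scenario wlo whi s' /\
  exists y', forall y s, is_scenario wlo whi s ->
    regret rho s x y <= regret rho s' x y'.

Definition prime_center (rho : R) (w : V -> V -> R) (k : V) : Prop :=
  k \in Bcenters rho w /\
  forall u, e k u -> btime rho w u (Tbar u k) <= btime rho w k (Tbar k u).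

Definition pif (P : Prop) (a b : R) : R :=
  if excluded_middle_informative P then a else b.

Definition alpha (wlo whi : V -> V -> R) (x v : V) (a b : V) : R :=
  pif (on_path x v a b \/ (a \in Tbar v x /\ b \in Tbar v x))
      (whi a b) (wlo a b).

End Broadcast.

(* Let u be the neighbour of y on the x-y path.  As y is a prime center under
   sdd, broadcasting from u into its side of the edge uy is no slower than from y
   into the far side; hence under sdd the vertex x finishes within the cost of
   sending along the path plus the time y needs for the far side.  The patched
   scenario raises the path edges to their upper bounds, lowers the off-path edges
   on x's side to their lower bounds and keeps sdd beyond y.  Then x still has to
   send along the path and y still has to serve the far side, so the broadcast
   time of x grows at least by the total raise on the path, while that of y grows
   at most by it: raising one edge by d delays any broadcast by at most d, and
   lowering weights never delays it.  So the regret of x against y does not drop,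
   and since y minimises the broadcast time under sdd this regret is already
   max_r(x). *)

From Pilot Require Import Defs.
From HB Require Import structures.
From mathcomp Require Import all_boot all_order all_algebra.
From mathcomp Require Import reals.
From mathcomp Require Import lra.
From Stdlib Require Import ClassicalDescription.
Set Implicit Arguments. Unset Strict Implicit. Unset Printing Implicit Defensive.
Import Order.TTheory GRing.Theory Num.Theory.
Local Open Scope ring_scope.

Section MaxMinList.
Variable R : realType.
Implicit Types (s : seq R) (c d x : R).

Lemma foldr_max_ub d s x : x \in d :: s -> x <= foldr Num.max d s.
Proof.
elim: s => [|a s IH] /=; first by rewrite inE => /eqP->.
rewrite !inE le_max => /or3P[xd|/eqP->|xs]; last 1 first.
- by rewrite IH ?inE ?xs ?orbT.
- by rewrite IH ?inE ?xd ?orbT.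
- by rewrite lexx.
Qed.

Lemma foldr_max_le d s c : (forall x, x \in d :: s -> x <= c) -> foldr Num.max d s <= c.
Proof.
elim: s => [|a s IH] h /=; first by rewrite h ?mem_head.
by rewrite ge_max h ?inE ?eqxx ?orbT //= IH // => z; rewrite inE => /orP[/eqP->|zs];
  rewrite h // !inE ?eqxx ?zs ?orbT.
Qed.

Lemma foldr_min_lb d s x : x \in d :: s -> foldr Num.min d s <= x.
Proof.
elim: s => [|a s IH] /=; first by rewrite inE => /eqP->.
rewrite !inE ge_min => /or3P[xd|/eqP->|xs]; last 1 first.
- by rewrite IH ?inE ?xs ?orbT.
- by rewrite IH ?inE ?xd ?orbT.
- by rewrite lexx.
Qed.

Lemma foldr_min_mem d s : foldr Num.min d s \in d :: s.
Proof.
elim: s => [|a s IH] /=; first exact: mem_head.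
rewrite /Num.min; case: ifP => _; first by rewrite !inE eqxx orbT.
by move: IH; rewrite !inE => /orP[->|->]; rewrite ?orbT.
Qed.

Lemma le_maxlist s x : x \in s -> x <= maxlist s.
Proof. by case: s => // a s xs; apply: foldr_max_ub; rewrite inE xs orbT. Qed.

Lemma maxlist_le s c : s != [::] -> (forall x, x \in s -> x <= c) -> maxlist s <= c.
Proof.
case: s => // a s _ h; apply: foldr_max_le => z.
by rewrite in_cons => /orP[/eqP->|/h//]; apply: h; rewrite mem_head.
Qed.

Lemma minlist_le s x : x \in s -> minlist s <= x.
Proof. by case: s => // a s xs; apply: foldr_min_lb; rewrite inE xs orbT. Qed.

Lemma minlist_mem s : s != [::] -> minlist s \in s.
Proof.
case: s => // a s _; have := foldr_min_mem a (a :: s).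
by rewrite /minlist /= in_cons => /orP[/eqP->|]//; rewrite mem_head.
Qed.

End MaxMinList.

Lemma index_filter_le (T : eqType) (P : pred T) (a : T) s :
  P a -> (index a (filter P s) <= index a s)%N.
Proof.
move=> Pa; elim: s => [|b s IH] //=.
case: ifP => Pb /=; rewrite /index /=; case: ifP => // ba; rewrite -/(index a _).
- by move/eqP: ba Pb => ->; rewrite Pa.
- exact: leqW.
Qed.

Lemma mem_mkseqP (T : eqType) (g : nat -> T) n x :
  reflect (exists2 i, (i < n)%N & x = g i) (x \in mkseq g n).
Proof.
apply: (iffP mapP) => [[i]|[i ilt ->]]; last by exists i; rewrite ?mem_iota.
by rewrite mem_iota add0n => /andP[_ ilt] ->; exists i.
Qed.

Lemma permutations_neq0 (T : eqType) (s : seq T) : permutations s != [::].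
Proof. by apply/eqP => h; have := mem_permutations s s; rewrite h perm_refl. Qed.

(* The root calls its children one per time step rho, in the order p; child v
   finishes at time (position + 1) * rho + f v. *)
Section Schedules.
Variables (R : realType) (V : eqType) (rho : R) (d : V).
Hypothesis rho_ge0 : 0 <= rho.
Implicit Types (f g : V -> R) (p N : seq V).

Definition sched_time f p : R :=
  maxlist (mkseq (fun i => (i.+1)%:R * rho + f (nth d p i)) (size p)).

Definition best_sched f N : R := minlist [seq sched_time f p | p <- permutations N].

Lemma sched_time_call f p i :
  (i < size p)%N -> (i.+1)%:R * rho + f (nth d p i) <= sched_time f p.
Proof. by move=> ilt; apply/le_maxlist/mem_mkseqP; exists i. Qed.

Lemma le_sched_time f p v : v \in p -> rho + f v <= sched_time f p.
Proof.
move=> vp; apply: le_trans (sched_time_call f (_ : index v p < size p)%N); last first.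
  by rewrite index_mem.
by rewrite nth_index // lerD2r ler_peMl // ler1n.
Qed.

Lemma sched_time_le f p c : p != [::] ->
  (forall i, (i < size p)%N -> (i.+1)%:R * rho + f (nth d p i) <= c) -> sched_time f p <= c.
Proof.
move=> p0 h; apply: maxlist_le => [|x /mem_mkseqP[i ilt ->]]; last exact: h.
by rewrite -size_eq0 size_mkseq size_eq0.
Qed.

Lemma sched_time_ge0 f p : (forall v, v \in p -> 0 <= f v) -> 0 <= sched_time f p.
Proof.
case: p => [|a p] f0; first by rewrite /sched_time /=.
by apply: le_trans (le_sched_time f (mem_head a p)); rewrite addr_ge0 ?f0 ?mem_head.
Qed.

Lemma best_schedP f N : exists2 p, perm_eq p N & best_sched f N = sched_time f p.
Proof.
have : best_sched f N \in [seq sched_time f p | p <- permutations N].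
  by apply: minlist_mem; rewrite -size_eq0 size_map size_eq0 permutations_neq0.
by case/mapP=> p pN ->; exists p; rewrite -?mem_permutations.
Qed.

Lemma best_sched_le f N p : perm_eq p N -> best_sched f N <= sched_time f p.
Proof. by move=> pN; apply/minlist_le/map_f; rewrite mem_permutations. Qed.

Lemma le_best_sched f N v : v \in N -> rho + f v <= best_sched f N.
Proof. by move=> vN; have [p pN ->] := best_schedP f N; rewrite le_sched_time ?(perm_mem pN). Qed.

Lemma best_sched_ge0 f N : (forall v, v \in N -> 0 <= f v) -> 0 <= best_sched f N.
Proof.
move=> f0; have [p pN ->] := best_schedP f N.
by apply: sched_time_ge0 => v; rewrite (perm_mem pN); apply: f0.
Qed.

Lemma best_sched_leD f g N (del : R) : 0 <= del ->
  (forall v, v \in N -> g v <= f v + del) -> best_sched g N <= best_sched f N + del.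
Proof.
move=> del0 gf; have [p pN ->] := best_schedP f N.
apply: le_trans (best_sched_le g pN) _.
case: p pN => [|a p] pN; first by rewrite /sched_time /= add0r.
apply: sched_time_le => // i ilt; apply: le_trans (lerD (sched_time_call f ilt) (lexx del)).
by rewrite -addrA lerD2l gf // -(perm_mem pN) mem_nth.
Qed.

Lemma eq_in_best_sched f g N : {in N, f =1 g} -> best_sched f N = best_sched g N.
Proof.
move=> fg; apply/le_anti/andP; split; rewrite -[leRHS]addr0;
  by apply: best_sched_leD => // v vN; rewrite addr0 fg.
Qed.

(* Calling v first and then the others optimally. *)
Lemma best_sched_rem f N v : v \in N ->
  best_sched f N <= Num.max (rho + f v) (rho + best_sched f (rem v N)).
Proof.
move=> vN; have [p pN ->] := best_schedP f (rem v N).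
have vpN : perm_eq (v :: p) N.
  by rewrite perm_sym (perm_trans (perm_to_rem vN)) // perm_cons perm_sym.
apply: le_trans (best_sched_le f vpN) _; apply: sched_time_le => // -[|j] jlt /=.
  by rewrite mul1r le_max lexx.
rewrite le_max -natr1 mulrDl mul1r [_ + rho]addrC -addrA; apply/orP; right.
by rewrite lerD2l; apply: sched_time_call.
Qed.

(* Dropping children can only help: call the remaining ones in the old relative order. *)
Lemma best_sched_subset f N' N : uniq N' -> uniq N -> {subset N' <= N} ->
  (forall v, v \in N -> 0 <= f v) -> best_sched f N' <= best_sched f N.
Proof.
move=> uN' uN N'N f0; have [p pN ->] := best_schedP f N.
pose q := [seq z <- p | z \in N'].
have up : uniq p by rewrite (perm_uniq pN).
have qN' : perm_eq q N'.
  apply: uniq_perm; rewrite ?filter_uniq // => z.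
  by rewrite /q mem_filter (perm_mem pN) andb_idr //; apply: N'N.
apply: le_trans (best_sched_le f qN') _.
have [->|q0] := eqVneq q [::].
  by apply: sched_time_ge0 => v; rewrite (perm_mem pN); apply: f0.
apply: sched_time_le => // i ilt; set a := nth d q i.
have /andP[aN' ap] : (a \in N') && (a \in p) by rewrite -mem_filter mem_nth.
apply: le_trans (sched_time_call f (_ : index a p < size p)%N); last by rewrite index_mem.
rewrite nth_index // lerD2r ler_wpM2r // ler_nat ltnS.
by rewrite -[X in (X <= _)%N](index_uniq d ilt) ?filter_uniq // index_filter_le.
Qed.

End Schedules.

Section BroadcastRecursion.
Variables (R : realType) (V : finType) (e : rel V) (rho : R).
Hypothesis e_irr : irreflexive e.
Hypothesis rho_ge0 : 0 <= rho.
Implicit Types (w : V -> V -> R) (G : {set V}).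

Lemma bfuelS w n u G : bfuel e rho w n.+1 u G =
  best_sched rho u (fun v => w u v + bfuel e rho w n v (Defs.comp e G u v)) (enum (nbrs e G u)).
Proof.
rewrite /= /best_sched; case: (enum (nbrs e G u)) => [|a N] /=.
  by rewrite /sched_time /minlist /= minxx.
congr minlist; apply: eq_map => p; congr maxlist; apply: eq_mkseq => i; by rewrite addrA.
Qed.

Lemma comp_subset G u v : Defs.comp e G u v \subset G :\ u.
Proof. by apply/subsetP => z; rewrite inE => /andP[]. Qed.

Lemma mem_comp_nbr G u v : v \in nbrs e G u -> v \in Defs.comp e G u v.
Proof.
rewrite !inE => /andP[vG euv]; rewrite connect0 vG andbT /=.
by apply: contraTneq euv => ->; rewrite e_irr.
Qed.

Lemma card_comp G u v : u \in G -> (#|Defs.comp e G u v| < #|G|)%N.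
Proof.
move=> uG; apply: leq_ltn_trans (subset_leq_card (comp_subset G u v)) _.
by rewrite [X in (_ < X)%N](cardsD1 u) uG.
Qed.

Lemma bfuel_enough w n m u G : u \in G -> (#|G| <= n)%N -> (#|G| <= m)%N ->
  bfuel e rho w n u G = bfuel e rho w m u G.
Proof.
elim: n m u G => [|n IH] [|m] u G uG; have G0 : (0 < #|G|)%N by apply/card_gt0P; exists u.
- by [].
- by rewrite leqn0 => /eqP G0'; rewrite G0' in G0.
- by move=> _; rewrite leqn0 => /eqP G0'; rewrite G0' in G0.
move=> Gn Gm; rewrite !bfuelS; apply: eq_in_best_sched => v; rewrite mem_enum => vN.
have cG := card_comp v uG; congr (_ + _); apply: IH; first exact: mem_comp_nbr.
  by rewrite -ltnS (leq_trans cG).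
by rewrite -ltnS (leq_trans cG).
Qed.

Lemma btimeE w u G : u \in G -> btime e rho w u G =
  best_sched rho u (fun v => w u v + btime e rho w v (Defs.comp e G u v)) (enum (nbrs e G u)).
Proof.
move=> uG; rewrite /btime; have : (0 < #|G|)%N by apply/card_gt0P; exists u.
case nG: #|G| => [//|n] _; rewrite bfuelS; apply: eq_in_best_sched => v.
rewrite mem_enum => vN; congr (_ + _); apply: bfuel_enough => //; first exact: mem_comp_nbr.
by rewrite -ltnS -nG card_comp.
Qed.

Lemma bfuel_ge0 w n u G : (forall a b, e a b -> 0 <= w a b) -> 0 <= bfuel e rho w n u G.
Proof.
move=> w0; elim: n u G => [|n IH] u G //; rewrite bfuelS; apply: best_sched_ge0 => // v.
by rewrite mem_enum inE => /andP[_ euv]; rewrite addr_ge0 ?w0.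
Qed.

Lemma bfuel_le w w' n u G : u \in G ->
  (forall a b, a \in G -> b \in G -> e a b -> w a b <= w' a b) ->
  bfuel e rho w n u G <= bfuel e rho w' n u G.
Proof.
elim: n u G => [|n IH] u G uG ww' //; rewrite !bfuelS -[leRHS]addr0.
apply: best_sched_leD => // v; rewrite mem_enum addr0 => vN.
have := vN; rewrite inE => /andP[vG euv].
rewrite lerD ?ww' // IH ?mem_comp_nbr // => a b aC bC; apply: ww'.
  by move/(subsetP (comp_subset G u v)): aC; rewrite !inE => /andP[].
by move/(subsetP (comp_subset G u v)): bC; rewrite !inE => /andP[].
Qed.

Lemma btime_le w w' u G : u \in G ->
  (forall a b, a \in G -> b \in G -> e a b -> w a b <= w' a b) ->
  btime e rho w u G <= btime e rho w' u G.
Proof. exact: bfuel_le. Qed.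

(* Below the raised edge its upper endpoint has been removed, so the raise is paid
   at most once along every branch of the recursion. *)
Lemma bfuel_raise_edge w w' n u G a b (del : R) : u \in G -> 0 <= del ->
  (forall c d, c \in G -> d \in G -> e c d ->
     w' c d <= w c d + (if ((c == a) && (d == b)) || ((c == b) && (d == a)) then del else 0)) ->
  bfuel e rho w' n u G <= bfuel e rho w n u G + del.
Proof.
elim: n u G => [|n IH] u G uG del0 ww'; first by rewrite add0r.
rewrite !bfuelS; apply: best_sched_leD => // v; rewrite mem_enum => vN.
have := vN; rewrite inE => /andP[vG euv].
have inC z : z \in Defs.comp e G u v -> (z \in G) && (z != u).
  by move/(subsetP (comp_subset G u v)); rewrite !inE andbC.
have := ww' u v uG vG euv; case: ifP => [uv_ab|_] wuv; last first.
  rewrite addr0 in wuv; rewrite -addrA lerD // IH ?mem_comp_nbr // => c d.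
  by move=> /inC/andP[cG _] /inC/andP[dG _]; apply: ww'.
rewrite addrAC lerD // bfuel_le ?mem_comp_nbr // => c d /inC/andP[cG cu] /inC/andP[dG du] ecd.
have := ww' c d cG dG ecd; case: ifP => [cd_ab|_]; last by rewrite addr0.
suff : (c == u) || (d == u) by rewrite (negbTE cu) (negbTE du).
by case/orP: uv_ab cd_ab => /andP[/eqP-> _] /orP[] /andP[/eqP-> /eqP->]; rewrite eqxx ?orbT.
Qed.

Section RaiseOnEdges.
Variables w w' : V -> V -> R.
Hypotheses (w_sym : forall a b, w a b = w b a) (w'_sym : forall a b, w' a b = w' b a).
Hypothesis w_le_w' : forall a b, e a b -> w a b <= w' a b.

Definition raise_on (l : seq (V * V)) a b : R :=
  if ((a, b) \in l) || ((b, a) \in l) then w' a b else w a b.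

Lemma raise_on_ge l a b : e a b -> w a b <= raise_on l a b.
Proof. by move=> eab; rewrite /raise_on; case: ifP => _ //; apply: w_le_w'. Qed.

Lemma raise_on_cons a b l c d : e c d ->
  raise_on ((a, b) :: l) c d <= raise_on l c d +
    (if ((c == a) && (d == b)) || ((c == b) && (d == a)) then w' a b - w a b else 0).
Proof.
move=> ecd; case: ifPn => cd_ab; last first.
  rewrite addr0 /raise_on !inE !xpair_eqE; move: cd_ab; rewrite negb_or => /andP[/negbTE-> cd_ba].
  by rewrite [(d == a) && _]andbC (negbTE cd_ba).
have := raise_on_ge l ecd.
have -> : raise_on ((a, b) :: l) c d = w' c d.
  by rewrite /raise_on !inE; case/orP: cd_ab => /andP[/eqP-> /eqP->]; rewrite eqxx ?orbT.
have [-> ->] : w' c d = w' a b /\ w c d = w a b.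
  by case/orP: cd_ab => /andP[/eqP-> /eqP->]; rewrite // w_sym w'_sym.
lra.
Qed.

Lemma btime_raise_on l u G : u \in G -> (forall ab, ab \in l -> e ab.1 ab.2) ->
  btime e rho (raise_on l) u G <= btime e rho w u G + \sum_(ab <- l) (w' ab.1 ab.2 - w ab.1 ab.2).
Proof.
move=> uG; elim: l => [|[a b] l IH] l_edges.
  by rewrite big_nil addr0; apply: btime_le => // c d _ _ _; rewrite /raise_on.
have eab : e a b by apply: (l_edges (a, b)); rewrite mem_head.
have step : btime e rho (raise_on ((a, b) :: l)) u G <=
            btime e rho (raise_on l) u G + (w' a b - w a b).
  apply: bfuel_raise_edge => //; first by rewrite subr_ge0 w_le_w'.
  by move=> c d _ _ ecd; apply: raise_on_cons.
have : btime e rho (raise_on l) u G <=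
       btime e rho w u G + \sum_(ab <- l) (w' ab.1 ab.2 - w ab.1 ab.2).
  by apply: IH => ab abl; apply: l_edges; rewrite inE abl orbT.
rewrite big_cons /=; lra.
Qed.

End RaiseOnEdges.

End BroadcastRecursion.

Lemma connect_uniq_path (T : finType) (r : rel T) x t :
  connect r x t -> exists p, [/\ path r x p, last x p = t & uniq (x :: p)].
Proof. by case/connectP => p rp ->; case: (shortenP rp) => p' rp' up' _; exists p'. Qed.

Lemma path_last_edge (T : Type) (r : rel T) z v q :
  path r z (v :: q) -> r (last z (belast v q)) (last v q).
Proof. by rewrite (lastI v q) rcons_path => /andP[_]. Qed.

Section Tree.
Variables (V : finType) (e : rel V).
Hypothesis tree : is_tree e.

Lemma tree_sym : symmetric e. Proof. by case: tree. Qed.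

Lemma tree_irr : irreflexive e. Proof. by case: tree => _ []. Qed.

Lemma tree_path_uniq x z p q : path e x p -> last x p = z -> uniq (x :: p) ->
  path e x q -> last x q = z -> uniq (x :: q) -> p = q.
Proof. by case: tree => _ [] _ [] _; apply. Qed.

Lemma tree_uniq_path x z : exists p, [/\ path e x p, last x p = z & uniq (x :: p)].
Proof. by case: tree => _ [] _ [] conn _; apply: connect_uniq_path. Qed.

Lemma edge_neq a b : e a b -> a != b.
Proof. by apply: contraTneq => ->; rewrite tree_irr. Qed.

Definition avoid (a : V) : rel V := [rel c d | [&& e c d, c != a & d != a]].

Lemma path_avoidW a x p : path (avoid a) x p -> path e x p.
Proof. by apply: sub_path => c d /and3P[]. Qed.

Lemma path_avoid_all a x p : path (avoid a) x p -> all (predC1 a) p.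
Proof. by elim: p x => [|b p IH] x //= /andP[/and3P[_ _ ->] /IH]. Qed.

Lemma path_avoid a x p : all (predC1 a) (x :: p) -> path e x p -> path (avoid a) x p.
Proof. by apply: sub_in_path => c d; rewrite !inE => ca da ecd; apply/and3P. Qed.

Lemma mem_Tc a b t : (t \in Tc e a b) = connect (avoid a) b t && (t != a).
Proof.
rewrite !inE andbT; congr (_ && _); apply: eq_connect => c d.
by rewrite /= !inE !andbT.
Qed.

Lemma mem_Tc_self a b : a != b -> b \in Tc e a b.
Proof. by rewrite mem_Tc connect0 eq_sym. Qed.

Lemma notin_Tc a b : a \notin Tc e a b.
Proof. by rewrite mem_Tc eqxx andbF. Qed.

Lemma Tc_nbr a b c : e b c -> b != a -> c != a -> c \in Tc e a b.
Proof. by move=> ebc ba ca; rewrite mem_Tc ca andbT connect1 //; apply/and3P. Qed.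

Lemma Tc_eq a b c : c \in Tc e a b -> Tc e a c = Tc e a b.
Proof.
rewrite mem_Tc => /andP[bc _]; apply/setP => t; rewrite !mem_Tc; congr (_ && _).
have sym : connect_sym (avoid a).
  by apply: sym_connect_sym => u v; rewrite /avoid /= tree_sym [(u != a) && _]andbC.
apply/idP/idP => [ct|bt]; first exact: connect_trans ct.
by apply: connect_trans bt; rewrite sym.
Qed.

(* Two simple paths from a to t, one through b and one avoiding it, contradict
   the uniqueness of paths; hence every vertex lies on exactly one side of ab. *)
Lemma setC_Tc a b : e a b -> ~: Tc e a b = Tc e b a.
Proof.
move=> eab; have ab := edge_neq eab.
apply/setP => t; rewrite inE; apply/idP/idP => [tNab|tba].
  have [q [aq qt uq]] := tree_uniq_path a t.
  have [bq|bNq] := boolP (b \in q); last first.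
    have bN v : v \in a :: q -> v != b.
      by rewrite inE => /orP[/eqP->//|vq]; apply: contraTneq vq => ->.
    rewrite mem_Tc -qt bN ?mem_last // andbT; apply/connectP; exists q => //.
    by apply: path_avoid => //; apply/allP.
  case/splitPr: bq aq qt uq => q1 q2 aq qt uq; case/negP: tNab.
  move: aq; rewrite cat_path => /andP[_ /= /andP[_ bq2]].
  move: uq; rewrite -cat_cons cat_uniq => /and3P[_ /hasPn dj _].
  have aNq2 v : v \in b :: q2 -> v != a by move=> /dj; apply: contraNneq => ->; rewrite mem_head.
  rewrite mem_Tc -qt last_cat /= aNq2 ?mem_last // andbT.
  by apply/connectP; exists q2; rewrite // path_avoid //; apply/allP => v /aNq2.
apply/negP; rewrite !mem_Tc in tba * => /andP[/connect_uniq_path[q1 [bq1 q1t uq1]] _].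
case/andP: tba => /connect_uniq_path[q2 [aq2 q2t uq2]] _.
have aNq1 : a \notin q1 by apply/negP => /(allP (path_avoid_all bq1)); rewrite /= eqxx.
have bq1E : b :: q1 = q2.
  apply: (@tree_path_uniq a t) => //=; first by rewrite eab (path_avoidW bq1).
  - by rewrite inE negb_or ab aNq1.
  - exact: path_avoidW aq2.
by have := path_avoid_all aq2; rewrite -bq1E /= eqxx.
Qed.

Lemma Tc_subset a b c : e a b -> e b c -> c != a -> Tc e b c \subset Tc e a b.
Proof.
move=> eab ebc ca; apply/subsetP => t tbc; apply: contraT => tNab.
have tba : t \in Tc e b a by rewrite -setC_Tc // inE.
have Tba : Tc e b a = Tc e b c by rewrite -(Tc_eq tba) (Tc_eq tbc).
have : c \in Tc e b a by rewrite Tba mem_Tc_self ?edge_neq.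
by rewrite -setC_Tc // inE Tc_nbr // eq_sym edge_neq.
Qed.

Lemma comp_Tc a b c : e a b -> e b c -> c != a -> Defs.comp e (Tc e a b) b c = Tc e b c.
Proof.
move=> eab ebc ca; apply/setP => t; rewrite [RHS]mem_Tc inE.
apply/andP/andP => [[ct]|[/connectP[q cq ->] qb]].
  rewrite !inE => /andP[-> _]; split=> //; move: ct; apply: connect_sub => u v.
  by rewrite /= !inE => /and3P[euv /andP[ub _] /andP[vb _]]; apply/connect1/and3P.
have sub : {subset c :: q <= Tc e b c}.
  move=> v vq; rewrite mem_Tc (path_connect cq vq) /=.
  move: vq; rewrite inE => /orP[/eqP->|]; first by rewrite eq_sym edge_neq.
  by apply: (allP (path_avoid_all cq)).
have inG v : v \in c :: q -> v \in Tc e a b :\ b.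
  move=> /sub vbc; rewrite in_setD1 (subsetP (Tc_subset eab ebc ca)) // andbT.
  by apply: contraTneq vbc => ->; rewrite notin_Tc.
split; last exact/inG/mem_last.
apply/connectP; exists q => //; apply: (sub_in_path (P := mem (c :: q)) _ _ (path_avoidW cq)).
  by move=> u v uq vq euv; rewrite /= euv !inG.
by apply/allP.
Qed.

Lemma path_mem_Tc x q c : path e x q -> uniq (x :: q) -> c \in x :: q -> c != last x q ->
  c \in Tc e (last x q) x.
Proof.
move=> xq uq cq; case/splitPl: cq xq uq => q1 q2 q1c.
rewrite cat_path -cat_cons cat_uniq last_cat q1c => /andP[xq1 _] /and3P[_ /hasPn dj _] cy.
have yN v : v \in x :: q1 -> v != last c q2.
  move=> vq1; have := mem_last c q2; rewrite inE => /orP[/eqP yc|yq2].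
    by apply: contraNneq cy => _; rewrite yc.
  by apply: contraTneq vq1 => ->; have := dj _ yq2; rewrite /= => ->.
rewrite mem_Tc cy andbT; apply/connectP; exists q1 => //.
by rewrite path_avoid //; apply/allP => v /yN.
Qed.

End Tree.

Section TreeBroadcast.
Variables (R : realType) (V : finType) (e : rel V) (rho : R).
Hypothesis tree : is_tree e.
Hypothesis rho_ge0 : 0 <= rho.
Implicit Types (w : V -> V -> R) (G : {set V}).

(* Seen from z, G looks like the whole tree: the components of G - z are full
   branches of T at z. *)
Definition rooted G z :=
  z \in G /\ forall c, c \in nbrs e G z -> Defs.comp e G z c = Tc e z c.

Lemma rooted_setT z : rooted setT z.
Proof. by split=> // c _; rewrite /Tc. Qed.

Lemma nbrs_Tc a z c : e a z -> (c \in nbrs e (Tc e a z) z) = e z c && (c != a).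
Proof.
move=> eaz; rewrite inE; apply/andP/andP => [[cT ->]|[ezc ca]]; split=> //.
  by apply: contraTneq cT => ->; rewrite notin_Tc.
by rewrite Tc_nbr // eq_sym (edge_neq tree).
Qed.

Lemma rooted_Tc a z : e a z -> rooted (Tc e a z) z.
Proof.
move=> eaz; split; first by rewrite mem_Tc_self ?(edge_neq tree).
by move=> c; rewrite nbrs_Tc // => /andP[ezc ca]; apply: comp_Tc.
Qed.

Definition branch w z c : R := w z c + btime e rho w c (Tc e z c).

Lemma btime_rooted w G z : rooted G z ->
  btime e rho w z G = best_sched rho z (branch w z) (enum (nbrs e G z)).
Proof.
case=> zG comp_z; rewrite btimeE //; last exact: tree_irr tree.
apply: eq_in_best_sched => c.
by rewrite mem_enum /branch => /comp_z ->.
Qed.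

Lemma btime_ge0 w z G : (forall a b, e a b -> 0 <= w a b) -> 0 <= btime e rho w z G.
Proof. exact: bfuel_ge0. Qed.

Lemma btime_ge_branch w G z c : rooted G z -> c \in nbrs e G z ->
  rho + branch w z c <= btime e rho w z G.
Proof. by move=> zr cz; rewrite btime_rooted // le_best_sched ?mem_enum. Qed.

(* Call c first; the remaining children of z are exactly its children in Tc c z. *)
Lemma btime_le_max_branch w G z c : (forall a b, e a b -> 0 <= w a b) ->
  rooted G z -> c \in nbrs e G z ->
  btime e rho w z G <= Num.max (rho + branch w z c) (rho + btime e rho w z (Tc e c z)).
Proof.
move=> w0 zr cz; rewrite btime_rooted //.
have cN : c \in enum (nbrs e G z) by rewrite mem_enum.
apply: le_trans (best_sched_rem rho z (branch w z) cN) _.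
suff others : best_sched rho z (branch w z) (rem c (enum (nbrs e G z))) <=
              btime e rho w z (Tc e c z).
  by rewrite le_max2 ?lerD2l.
have ezc : e z c by move: cz; rewrite inE => /andP[].
have ecz : e c z by rewrite (tree_sym tree).
rewrite (btime_rooted _ (rooted_Tc ecz)); apply: (best_sched_subset z rho_ge0).
- exact: (rem_uniq _ (enum_uniq _)).
- exact: enum_uniq.
- move=> v; rewrite (mem_rem_uniq _ (enum_uniq _)) => /andP[vc]; rewrite !mem_enum nbrs_Tc //.
  by rewrite inE vc andbT => /andP[].
- move=> v; rewrite mem_enum nbrs_Tc // => /andP[ezv _].
  by rewrite addr_ge0 ?w0 ?btime_ge0.
Qed.

Lemma btime_Tc_le_next w z v v' : (forall a b, e a b -> 0 <= w a b) ->
  e z v -> e v v' -> z != v' -> btime e rho w z (Tc e v z) <= btime e rho w v (Tc e v' v).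
Proof.
move=> w0 ezv evv' zv'.
have ev'v : e v' v by rewrite (tree_sym tree).
have zN : z \in nbrs e (Tc e v' v) v by rewrite nbrs_Tc // [e v z](tree_sym tree) ezv.
apply: le_trans (btime_ge_branch w (rooted_Tc ev'v) zN).
by rewrite /branch addrA lerDr addr_ge0 ?w0 // [e v z](tree_sym tree).
Qed.

(* Time for a message to travel along s when every vertex calls its successor first. *)
Definition path_cost w (s : seq V) : R :=
  \sum_(ab <- zip s (behead s)) (rho + w ab.1 ab.2).

Lemma path_cost_cons2 w z v q : path_cost w [:: z, v & q] = rho + w z v + path_cost w (v :: q).
Proof. by rewrite /path_cost /= big_cons. Qed.

Lemma path_cost1 w z : path_cost w [:: z] = 0.
Proof. by rewrite /path_cost /= big_nil. Qed.

Lemma path_cost_ge0 w z q : (forall a b, e a b -> 0 <= w a b) -> path e z q ->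
  0 <= path_cost w (z :: q).
Proof.
move=> w0; elim: q z => [|v q IH] z; first by rewrite path_cost1.
by move=> /= /andP[ezv vq]; rewrite path_cost_cons2 !addr_ge0 ?w0 ?IH.
Qed.

Lemma btime_le_edge w G z v (X : R) : (forall a b, e a b -> 0 <= w a b) ->
  rooted G z -> v \in G -> e z v ->
  btime e rho w v (Tc e z v) <= X -> btime e rho w z (Tc e v z) <= X ->
  btime e rho w z G <= rho + w z v + X.
Proof.
move=> w0 zr vG ezv vX zX; have vN : v \in nbrs e G z by rewrite inE vG ezv.
apply: le_trans (btime_le_max_branch w0 zr vN) _.
by rewrite ge_max /branch -addrA !lerD2l vX /= ler_wpDl ?w0.
Qed.

Lemma btime_behind_le_last w z v q : (forall a b, e a b -> 0 <= w a b) ->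
  path e z (v :: q) -> uniq [:: z, v & q] ->
  btime e rho w z (Tc e v z) <=
  btime e rho w (last z (belast v q)) (Tc e (last v q) (last z (belast v q))).
Proof.
move=> w0; elim: q z v => [|v' q IH] z v /=; first by rewrite lexx.
move=> /and3P[ezv evv' v'q] /andP[zN uq].
have zv' : z != v' by apply: contraNneq zN => ->; rewrite !inE eqxx orbT.
apply: le_trans (btime_Tc_le_next w0 ezv evv' zv') _.
by apply: IH; rewrite /= ?evv'.
Qed.

Lemma path_cost_le_btime w G z v q : rooted G z -> v \in G ->
  path e z (v :: q) -> uniq [:: z, v & q] ->
  path_cost w [:: z, v & q] + btime e rho w (last v q) (Tc e (last z (belast v q)) (last v q))
    <= btime e rho w z G.
Proof.
elim: q z v G => [|v' q IH] z v G zr vG /= /andP[ezv vq] uq.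
  have vN : v \in nbrs e G z by rewrite inE vG ezv.
  by rewrite path_cost_cons2 path_cost1 addr0 -addrA (btime_ge_branch w zr vN).
have vN : v \in nbrs e G z by rewrite inE vG ezv.
rewrite path_cost_cons2 -!addrA; apply: le_trans (btime_ge_branch w zr vN).
rewrite /branch !lerD2l; case/andP: vq => evv' v'q; case/andP: uq => zN uq.
have zv' : v' != z by apply: contraNneq zN => ->; rewrite !inE eqxx orbT.
apply: IH; rewrite /= ?evv' //; first exact: rooted_Tc.
by rewrite Tc_nbr // eq_sym (edge_neq tree).
Qed.

(* Send along the path first.  Every part left behind finishes no later than the
   part behind u, and the hypothesis (the prime-center inequality on the last edge)
   bounds that by the time of y's side. *)
Lemma btime_le_path_cost w G z v q : (forall a b, e a b -> 0 <= w a b) ->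
  rooted G z -> v \in G -> path e z (v :: q) -> uniq [:: z, v & q] ->
  btime e rho w (last z (belast v q)) (Tc e (last v q) (last z (belast v q)))
    <= btime e rho w (last v q) (Tc e (last z (belast v q)) (last v q)) ->
  btime e rho w z G <= path_cost w [:: z, v & q] +
    btime e rho w (last v q) (Tc e (last z (belast v q)) (last v q)).
Proof.
move=> w0; elim: q z v G => [|v' q IH] z v G zr vG zq uq last_le.
  rewrite path_cost_cons2 path_cost1 addr0 /=; case/andP: zq => ezv _.
  by apply: btime_le_edge => //; rewrite lexx.
have /andP[ezv vq] := zq; rewrite path_cost_cons2 -[X in _ <= X]addrA.
apply: btime_le_edge => //.
  case/andP: vq => evv' v'q; case/andP: (uq) => zN uvq.
  have zv' : v' != z by apply: contraNneq zN => ->; rewrite !inE eqxx orbT.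
  apply: IH => //; rewrite /= ?evv' //; first exact: rooted_Tc.
  by rewrite Tc_nbr // eq_sym (edge_neq tree).
apply: le_trans (btime_behind_le_last w0 zq uq) _; apply: le_trans last_le _.
by rewrite ler_wpDl ?path_cost_ge0.
Qed.

End TreeBroadcast.

Lemma zip_behead_infix (T : eqType) (a b : T) s :
  ((a, b) \in zip s (behead s)) = infix [:: a; b] s.
Proof.
elim: s => [|c s IH] //=; case: s IH => [|d s] IH /=; first by rewrite orbF; case: (a == c).
by rewrite inE IH xpair_eqE /= prefix0s andbT.
Qed.

Lemma path_zip_edge (T : eqType) (r : rel T) x s a b :
  path r x s -> (a, b) \in zip (x :: s) s -> r a b.
Proof.
elim: s x => [|c s IH] x //= /andP[rxc cs].
by rewrite inE xpair_eqE => /orP[/andP[/eqP-> /eqP->] //|]; apply: IH.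
Qed.

Section Pif.
Variable R : realType.

Lemma pifT (P : Prop) (a b : R) : P -> pif P a b = a.
Proof. by rewrite /pif; case: excluded_middle_informative. Qed.

Lemma pifF (P : Prop) (a b : R) : ~ P -> pif P a b = b.
Proof. by rewrite /pif; case: excluded_middle_informative. Qed.

Lemma pif_iff (P Q : Prop) (a b : R) : (P <-> Q) -> pif P a b = pif Q a b.
Proof.
move=> PQ; have [p|np] := excluded_middle_informative P.
  by rewrite !pifT // -PQ.
by rewrite !pifF // -PQ.
Qed.

Lemma scenario_pif (V : finType) (e : rel V) (wlo whi : V -> V -> R)
    (P : V -> V -> Prop) (w1 w2 : V -> V -> R) :
  (forall a b, P a b <-> P b a) ->
  is_scenario e wlo whi w1 -> is_scenario e wlo whi w2 ->
  is_scenario e wlo whi (fun a b => pif (P a b) (w1 a b) (w2 a b)).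
Proof.
move=> Psym [w1_sym w1_in] [w2_sym w2_in]; split=> [a b|a b eab].
  by rewrite w1_sym w2_sym; apply: pif_iff.
have [p|np] := excluded_middle_informative (P a b).
  by rewrite pifT // w1_in.
by rewrite pifF // w2_in.
Qed.

End Pif.

(* Since y is a broadcast center under sdd, sdd already maximises regret at y. *)
Lemma worst_case_at_center (R : realType) (V : finType) (e : rel V) (rho : R)
    (wlo whi : V -> V -> R) (x y y' : V) (sdd s : V -> V -> R) :
  (forall y2 s2, is_scenario e wlo whi s2 -> regret e rho s2 x y2 <= regret e rho sdd x y') ->
  y \in Bcenters e rho sdd -> is_scenario e wlo whi s ->
  regret e rho sdd x y <= regret e rho s x y ->
  worst_case e rho wlo whi x s /\ y \in Bcenters e rho s.
Proof.
move=> max_y' /[!inE] /forallP /(_ y') yc s_scen le_reg.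
have max_y : forall y2 s2, is_scenario e wlo whi s2 ->
    regret e rho s2 x y2 <= regret e rho s x y.
  move=> y2 s2 /(max_y' y2) le2; apply: le_trans le2 (le_trans _ le_reg).
  by rewrite /regret lerD2l lerN2.
split; first by split=> //; exists y.
apply/forallP => v; have := max_y v s s_scen.
by rewrite /regret lerD2l lerN2.
Qed.

Section PatchedScenario.
Variables (R : realType) (V : finType) (e : rel V) (rho : R).
Variables (wlo whi sdd : V -> V -> R) (x y v : V) (q : seq V).
Hypothesis tree : is_tree e.
Hypothesis rho_ge0 : 0 <= rho.
Hypotheses (wlo_sym : forall a b, wlo a b = wlo b a) (whi_sym : forall a b, whi a b = whi b a).
Hypothesis wlo_ge0_le_whi : forall a b, e a b -> 0 <= wlo a b <= whi a b.
Hypothesis sdd_scen : is_scenario e wlo whi sdd.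
Hypotheses (xq : path e x (v :: q)) (qy : last v q = y) (uq : uniq [:: x, v & q]).

Let u := last x (belast v q).
Let L := zip [:: x, v & q] (v :: q).

Definition patched a b :=
  pif (on_path e x y a b \/ (a \in Tc e y x /\ b \in Tc e y x))
      (alpha e wlo whi x y a b) (sdd a b).

Lemma sdd_ge0 a b : e a b -> 0 <= sdd a b.
Proof.
move=> eab; case: sdd_scen => _ /(_ a b eab) /andP[lo _]; apply: le_trans lo.
by have /andP[] := wlo_ge0_le_whi eab.
Qed.

Lemma sdd_le_whi a b : e a b -> sdd a b <= whi a b.
Proof. by case: sdd_scen => _ /(_ a b) h /h /andP[]. Qed.

Lemma on_path_sym a b : on_path e x y a b <-> on_path e x y b a.
Proof. by split; case=> p [? ? ? ab]; exists p; split; rewrite // orbC. Qed.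

Lemma on_pathE a b : on_path e x y a b <-> ((a, b) \in L) || ((b, a) \in L).
Proof.
rewrite /L !zip_behead_infix; split => [[p [xp py up]]|ab].
  by rewrite (tree_path_uniq tree xp py up xq qy uq).
by exists (v :: q).
Qed.

Lemma patched_scenario : is_scenario e wlo whi patched.
Proof.
have sym2 (P : V -> V -> Prop) : (forall a b, P a b -> P b a) -> forall a b, P a b <-> P b a.
  by move=> PP a b; split; apply: PP.
apply: scenario_pif => //.
  apply: sym2 => a b [/on_path_sym|[]]; by [left|right].
apply: scenario_pif.
- apply: sym2 => a b [/on_path_sym|[]]; by [left|right].
- by split=> // a b /wlo_ge0_le_whi /andP[_ ->]; rewrite lexx.
- by split=> // a b /wlo_ge0_le_whi /andP[_ ->]; rewrite lexx.
Qed.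

Lemma u_edge : e u y.
Proof. by rewrite -qy; apply: path_last_edge xq. Qed.

Lemma Tc_y_u : Tc e y u = Tc e y x.
Proof.
apply: (Tc_eq tree); rewrite -qy; apply: (path_mem_Tc xq uq).
  rewrite /u; have := mem_last x (belast v q); rewrite inE => /orP[/eqP->|uq'].
    exact: mem_head.
  by rewrite inE (mem_belast uq') orbT.
by rewrite /= qy (edge_neq tree u_edge).
Qed.

Lemma prime_center_last_edge : prime_center e rho sdd y ->
  btime e rho sdd u (Tc e y u) <= btime e rho sdd y (Tc e u y).
Proof.
have eyu : e y u by rewrite (tree_sym tree) u_edge.
by case=> _ /(_ u eyu); rewrite /Tbar (setC_Tc tree u_edge) (setC_Tc tree eyu).
Qed.

Lemma patched_beyond a b : a \in Tc e u y -> b \in Tc e u y -> e a b -> patched a b = sdd a b.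
Proof.
have notin_Tcyx c : c \in Tc e u y -> c \notin Tc e y x.
  have eyu : e y u by rewrite (tree_sym tree) u_edge.
  by rewrite -Tc_y_u -(setC_Tc tree eyu) inE.
move=> aT bT eab; rewrite /patched pifF // => -[/on_pathE ab|[aT' _]]; last first.
  by move: aT'; rewrite (negbTE (notin_Tcyx a aT)).
have [ap bp] : a \in [:: x, v & q] /\ b \in [:: x, v & q].
  rewrite /L !zip_behead_infix in ab.
  by case/orP: ab => /mem_infix sub; split; apply: sub; rewrite !inE eqxx ?orbT.
have [c [cT cp cy]] : exists c, [/\ c \in Tc e u y, c \in [:: x, v & q] & c != y].
  have [ay|ay] := eqVneq a y; last by exists a.
  by exists b; split=> //; rewrite -ay eq_sym (edge_neq tree eab).
have := path_mem_Tc xq uq cp; rewrite /= qy => /(_ cy).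
by apply/negP/notin_Tcyx.
Qed.

Lemma patched_on_path a b : (a, b) \in L -> patched a b = whi a b.
Proof.
move=> abL; have ab : on_path e x y a b by apply/on_pathE; rewrite abL.
by rewrite /patched /alpha !pifT //; left.
Qed.

Lemma path_cost_patched : path_cost rho patched [:: x, v & q] =
  path_cost rho sdd [:: x, v & q] + \sum_(ab <- L) (whi ab.1 ab.2 - sdd ab.1 ab.2).
Proof.
rewrite /path_cost -big_split; apply: eq_big_seq => -[a b] abL /=.
rewrite patched_on_path //; lra.
Qed.

Lemma patched_le_raise a b : e a b -> patched a b <= raise_on sdd whi L a b.
Proof.
move=> eab; have sdd_le := raise_on_ge sdd_le_whi L eab; rewrite /patched.
have [ab|Nab] := excluded_middle_informative (on_path e x y a b).
  rewrite pifT; last by left.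
  by rewrite /alpha pifT; [move/on_pathE: ab; rewrite /raise_on => -> | left].
have [[aT bT]|NT] := excluded_middle_informative (a \in Tc e y x /\ b \in Tc e y x).
  rewrite pifT; last by right.
  rewrite /alpha pifF; last by case=> // -[]; rewrite /Tbar inE aT.
  by apply: le_trans sdd_le; case: sdd_scen => _ /(_ a b eab) /andP[].
by rewrite pifF // => -[].
Qed.

Lemma btime_patched_le : btime e rho patched y setT <=
  btime e rho sdd y setT + \sum_(ab <- L) (whi ab.1 ab.2 - sdd ab.1 ab.2).
Proof.
have e_irr := tree_irr tree; have [sdd_sym _] := sdd_scen.
have L_edges : forall ab, ab \in L -> e ab.1 ab.2 by case=> a b /(path_zip_edge xq).
apply: le_trans (btime_raise_on rho e_irr sdd_sym whi_sym sdd_le_whi (in_setT y) L_edges).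
by apply: (btime_le rho e_irr (in_setT y)) => a b _ _; apply: patched_le_raise.
Qed.

Lemma regret_patched_ge : prime_center e rho sdd y ->
  regret e rho sdd x y <= regret e rho patched x y.
Proof.
move=> yc.
have upper := btime_le_path_cost tree rho_ge0 sdd_ge0 (rooted_setT e x) (in_setT v) xq uq.
have lower := path_cost_le_btime tree rho_ge0 patched (rooted_setT e x) (in_setT v) xq uq.
rewrite qy -/u in upper lower; have {}upper := upper (prime_center_last_edge yc).
have beyond : btime e rho patched y (Tc e u y) = btime e rho sdd y (Tc e u y).
  have yT : y \in Tc e u y by rewrite mem_Tc_self ?(edge_neq tree u_edge).
  by apply/le_anti/andP; split; apply: (btime_le rho (tree_irr tree) yT) => a b aT bT eab;
    rewrite patched_beyond.
move: lower; rewrite beyond path_cost_patched /regret.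
have := btime_patched_le; lra.
Qed.

End PatchedScenario.

Theorem fact1 (R : realType) (V : finType) (e : rel V)
  (wlo whi : V -> V -> R) (rho : R) (x y : V) (sdd : V -> V -> R) :
  is_tree e ->
  (forall a b, wlo a b = wlo b a) -> (forall a b, whi a b = whi b a) ->
  (forall a b, e a b -> 0 <= wlo a b <= whi a b) ->
  0 < rho ->
  y != x ->
  worst_case e rho wlo whi x sdd ->
  prime_center e rho sdd y ->
  let s := fun a b =>
    pif (on_path e x y a b \/ (a \in Tc e y x /\ b \in Tc e y x))
        (alpha e wlo whi x y a b) (sdd a b) in
  worst_case e rho wlo whi x s /\ y \in Bcenters e rho s.
Proof.
move=> tree wlo_sym whi_sym wlo_whi rho_gt0 yx [sdd_scen [y' max_y']] yc s.
have [[|v q] [xq qy uq]] := tree_uniq_path tree x y; first by rewrite -qy eqxx in yx.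
apply: (worst_case_at_center max_y' yc.1).
  exact: patched_scenario wlo_sym whi_sym wlo_whi sdd_scen.
exact: regret_patched_ge tree (ltW rho_gt0) whi_sym wlo_whi sdd_scen xq qy uq yc.
Qed.
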